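(* Let $\mathcal{L}_\land\subseteq\{\land,\lor,\to,\lnot,0,1\}$ be a language containing $\land$, and let $\Phi$ be a Sahlqvist quasiequation in $\mathcal{L}_\land$. If an $\mathcal{L}_\land$-subreduct $\boldsymbol{A}$ of a Heyting algebra validates $\Phi$, then the Heyting algebra $\mathsf{Up}(\boldsymbol{A}_\ast)$ validates $\Phi$.
   Context: Formulas are built from variables using $\land,\lor,\to$ (binary), $\lnot$ (unary) and constants $0,1$. An occurrence of a variable in a formula is positive (resp. negative) if the number of negations and antecedents of implications in whose scope it lies is even (resp. odd); a formula is positive (resp. negative) if all variable occurrences in it are positive (resp. negative). A Sahlqvist antecedent is a formula constructed from variables, negative formulas and the constants $0,1$ using only $\land,\lor$. A Sahlqvist implication is a formula that is positive, or of the form $\lnot\varphi$ with $\varphi$ a Sahlqvist antecedent, or of the form $\varphi\to\psi$ with $\varphi$ a Sahlqvist antecedent and $\psi$ positive. A Sahlqvist quasiequation is a universally quantified sentence $\varphi_1\land y\le z\,\&\cdots\&\,\varphi_n\land y\le z\Longrightarrow y\le z$, where $y,z$ are distinct variables not occurring in $\varphi_1,\dots,\varphi_n$, each $\varphi_i$ is built from Sahlqvist implications using only $\land,\lor$, and $a\le b$ abbreviates the equation $a\land b\approx a$; it is in $\mathcal{L}_\land$ if all symbols in the $\varphi_i$ are in $\mathcal{L}_\land$. An $\mathcal{L}_\land$-subreduct of a Heyting algebra is a subalgebra of its reduct to $\mathcal{L}_\land$. For such $\boldsymbol{A}$, a filter is a nonempty upset (w.r.t. $a\le b\iff a\land b=a$)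 closed under $\land$, meet irreducible if proper and not the intersection of two filters both different from it, and $\boldsymbol{A}_\ast$ is the poset of meet irreducible filters under inclusion. For a poset $\mathbb{X}$, $\mathsf{Up}(\mathbb{X})=\langle\mathsf{Up}(\mathbb{X});\cap,\cup,\to,\emptyset,X\rangle$ is the Heyting algebra of upsets with $U\to V=X\smallsetminus{\downarrow}(U\smallsetminus V)$. *)

From Stdlib Require Import List.
Import ListNotations.

Inductive fm : Type :=
| Var : nat -> fm
| And : fm -> fm -> fm
| Or  : fm -> fm -> fm
| Imp : fm -> fm -> fm
| Neg : fm -> fm
| Bot : fm
| Top : fm.

(** The symbols of the full language {/\, \/, ->, ~, 0, 1}. A sublanguage is a
    predicate [L : sym -> Prop]. *)
Inductive sym : Type := SAnd | SOr | SImp | SNeg | S0 | S1.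

Fixpoint in_lang (L : sym -> Prop) (f : fm) : Prop :=
  match f with
  | Var _ => True
  | And a b => L SAnd /\ in_lang L a /\ in_lang L b
  | Or a b => L SOr /\ in_lang L a /\ in_lang L b
  | Imp a b => L SImp /\ in_lang L a /\ in_lang L b
  | Neg a => L SNeg /\ in_lang L a
  | Bot => L S0
  | Top => L S1
  end.

Fixpoint occurs (n : nat) (f : fm) : Prop :=
  match f with
  | Var m => m = n
  | And a b | Or a b | Imp a b => occurs n a \/ occurs n b
  | Neg a => occurs n a
  | Bot | Top => False
  end.

(** [polar p f]: every variable occurrence in [f] has polarity [p]
    ([true] = positive, i.e. an even number of negations/antecedents of
    implications in whose scope it lies; [false] = negative). *)
Fixpoint polar (p : bool) (f : fm) : Prop :=
  match f with
  | Var _ => p = true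
  | And a b | Or a b => polar p a /\ polar p b
  | Imp a b => polar (negb p) a /\ polar p b
  | Neg a => polar (negb p) a
  | Bot | Top => True
  end.

Definition positive (f : fm) : Prop := polar true f.
Definition negative (f : fm) : Prop := polar false f.

Inductive sahl_ant : fm -> Prop :=
| sa_var : forall n, sahl_ant (Var n)
| sa_neg : forall f, negative f -> sahl_ant f
| sa_bot : sahl_ant Bot
| sa_top : sahl_ant Top
| sa_and : forall a b, sahl_ant a -> sahl_ant b -> sahl_ant (And a b)
| sa_or  : forall a b, sahl_ant a -> sahl_ant b -> sahl_ant (Or a b).

Definition sahl_impl (f : fm) : Prop :=
  positive f
  \/ (exists g, f = Neg g /\ sahl_ant g)
  \/ (exists g h, f = Imp g h /\ sahl_ant g /\ positive h).

Inductive sahl_comb : fm -> Prop :=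
| sc_base : forall f, sahl_impl f -> sahl_comb f
| sc_and : forall a b, sahl_comb a -> sahl_comb b -> sahl_comb (And a b)
| sc_or  : forall a b, sahl_comb a -> sahl_comb b -> sahl_comb (Or a b).

(** A quasiequation
      phi_1 /\ y <= z & ... & phi_n /\ y <= z  ==>  y <= z
    is encoded by the list [qe_prems] = [phi_1; ...; phi_n] and the variable
    indices [qe_y], [qe_z]. *)
Record quasieq : Type := QE { qe_prems : list fm; qe_y : nat; qe_z : nat }.

Definition sahlqvist_qe (L : sym -> Prop) (q : quasieq) : Prop :=
  qe_y q <> qe_z q /\
  (forall phi, In phi (qe_prems q) ->
     sahl_comb phi /\ in_lang L phi /\
     ~ occurs (qe_y q) phi /\ ~ occurs (qe_z q) phi).

Record ops (T : Type) : Type := Ops {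
  o_and : T -> T -> T; o_or : T -> T -> T; o_imp : T -> T -> T;
  o_neg : T -> T; o_bot : T; o_top : T }.
Arguments o_and {T}. Arguments o_or {T}. Arguments o_imp {T}.
Arguments o_neg {T}. Arguments o_bot {T}. Arguments o_top {T}.

Fixpoint eval {T} (o : ops T) (v : nat -> T) (f : fm) : T :=
  match f with
  | Var n => v n
  | And a b => o_and o (eval o v a) (eval o v b)
  | Or a b => o_or o (eval o v a) (eval o v b)
  | Imp a b => o_imp o (eval o v a) (eval o v b)
  | Neg a => o_neg o (eval o v a)
  | Bot => o_bot o
  | Top => o_top o
  end.

(** Validity of a quasiequation in the algebra whose universe is [P] (a subset
    of [T] closed under the relevant operations [o]) and whose equality is [E].
    [a <= b] abbreviates the equation [a /\ b = a]. *)
Definition valid_qe {T} (o : ops T) (P : T -> Prop) (E : T -> T -> Prop)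
    (q : quasieq) : Prop :=
  forall v : nat -> T, (forall n, P (v n)) ->
    (forall phi, In phi (qe_prems q) ->
       let a := o_and o (eval o v phi) (v (qe_y q)) in
       E (o_and o a (v (qe_z q))) a) ->
    E (o_and o (v (qe_y q)) (v (qe_z q))) (v (qe_y q)).

(** A Heyting algebra: a bounded lattice with a residuated implication
    (a /\ b <= c  iff  a <= b -> c), where x <= y iff x /\ y = x. *)
Record HA : Type := MkHA {
  hc :> Type;
  hmeet : hc -> hc -> hc;
  hjoin : hc -> hc -> hc;
  himp : hc -> hc -> hc;
  hbot : hc;
  htop : hc;
  hmeet_comm : forall a b, hmeet a b = hmeet b a;
  hmeet_assoc : forall a b c, hmeet a (hmeet b c) = hmeet (hmeet a b) c;
  hjoin_comm : forall a b, hjoin a b = hjoin b a;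
  hjoin_assoc : forall a b c, hjoin a (hjoin b c) = hjoin (hjoin a b) c;
  hmeet_absorb : forall a b, hmeet a (hjoin a b) = a;
  hjoin_absorb : forall a b, hjoin a (hmeet a b) = a;
  hmeet_top : forall a, hmeet a htop = a;
  hjoin_bot : forall a, hjoin a hbot = a;
  hresiduation : forall a b c,
    hmeet (hmeet a b) c = hmeet a b <-> hmeet a (himp b c) = a
}.

Definition hle (H : HA) (a b : H) : Prop := hmeet H a b = a.

Definition HA_ops (H : HA) : ops H :=
  Ops (hc H) (hmeet H) (hjoin H) (himp H) (fun a => himp H a (hbot H)) (hbot H) (htop H).

(** [S] is (the universe of) an L-subreduct of [H]: a nonempty subset closed
    under the operations of [L]. The algebra A is [S] with the restricted
    operations. *)
Definition subreduct (L : sym -> Prop) (H : HA) (S : H -> Prop) : Prop :=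
  (exists a, S a) /\
  (L SAnd -> forall a b, S a -> S b -> S (hmeet H a b)) /\
  (L SOr -> forall a b, S a -> S b -> S (hjoin H a b)) /\
  (L SImp -> forall a b, S a -> S b -> S (himp H a b)) /\
  (L SNeg -> forall a, S a -> S (himp H a (hbot H))) /\
  (L S0 -> S (hbot H)) /\
  (L S1 -> S (htop H)).

Definition sub_validates (H : HA) (S : H -> Prop) (q : quasieq) : Prop :=
  valid_qe (HA_ops H) S eq q.

Definition filter (H : HA) (S : H -> Prop) (F : H -> Prop) : Prop :=
  (forall a, F a -> S a) /\
  (exists a, F a) /\
  (forall a b, F a -> S b -> hle H a b -> F b) /\
  (forall a b, F a -> F b -> F (hmeet H a b)).

Definition meet_irreducible (H : HA) (S : H -> Prop) (F : H -> Prop) : Prop :=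
  filter H S F /\
  (exists a, S a /\ ~ F a) /\
  ~ (exists G1 G2, filter H S G1 /\ filter H S G2 /\ G1 <> F /\ G2 <> F /\
       F = (fun x => G1 x /\ G2 x)).

Definition Astar (H : HA) (S : H -> Prop) : Type :=
  { F : H -> Prop | meet_irreducible H S F }.

Definition Astar_le (H : HA) (S : H -> Prop) (F G : Astar H S) : Prop :=
  forall x, proj1_sig F x -> proj1_sig G x.

Definition is_upset {X : Type} (le : X -> X -> Prop) (U : X -> Prop) : Prop :=
  forall x y, U x -> le x y -> U y.

Definition up_imp {X : Type} (le : X -> X -> Prop) (U V : X -> Prop) : X -> Prop :=
  fun x => ~ exists y, le x y /\ U y /\ ~ V y.

Definition Up_ops {X : Type} (le : X -> X -> Prop) : ops (X -> Prop) :=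
  Ops (X -> Prop) (fun U V x => U x /\ V x)
      (fun U V x => U x \/ V x)
      (up_imp le)
      (fun U => up_imp le U (fun _ => False))
      (fun _ => False)
      (fun _ => True).

Definition Up_validates {X : Type} (le : X -> X -> Prop) (q : quasieq) : Prop :=
  valid_qe (Up_ops le) (is_upset le) (fun U V => forall x, U x <-> V x) q.

From Stdlib Require Import List Classical FunctionalExtensionality PropExtensionality.
From mathcomp Require classical_sets.
Import ListNotations.

(* Suppose an upset valuation [V] of [Up(A_* )] refutes the quasiequation, so that all premises
   fail at some point [F] while [y] holds there.  Because the premises are built from Sahlqvist
   implications, their failure at [F] is caused by finitely many witness points [K] with [K] in
   [V n]; the assignments [a] into [A] with [a n] in every such [K] form a down-directed family,
   and an Esakia-style intersection argument shows that the premises already fail at [F] for one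
   member [a] of this family, i.e. every [phi(a)] lies outside the meet irreducible filter [F].
   Meet irreducibility then produces [y, z] in [A] with [phi(a) /\ y <= z] for all premises but
   [y </= z], contradicting validity in [A].  When the language has negation but no implication,
   meet irreducible filters need not be prime, and the witnesses are taken among maximal filters,
   where the upset implication is classical. *)

Section HeytingOrder.
Variable H : HA.

Lemma hle_refl (a : H) : hle H a a.
Proof. unfold hle. rewrite <- (hjoin_absorb H a a) at 2. apply hmeet_absorb. Qed.

Lemma hle_trans (a b c : H) : hle H a b -> hle H b c -> hle H a c.
Proof. unfold hle; intros Hab Hbc. rewrite <- Hab, <- hmeet_assoc, Hbc. reflexivity. Qed.

Lemma hle_antisym (a b : H) : hle H a b -> hle H b a -> a = b.
Proof. unfold hle; intros Hab Hba. rewrite <- Hab, hmeet_comm. exact Hba. Qed.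

Lemma hle_meet_l (a b : H) : hle H (hmeet H a b) a.
Proof.
  unfold hle. rewrite (hmeet_comm H _ a), hmeet_assoc, (hle_refl a). reflexivity.
Qed.

Lemma hle_meet_r (a b : H) : hle H (hmeet H a b) b.
Proof. unfold hle. rewrite <- hmeet_assoc, (hle_refl b). reflexivity. Qed.

Lemma hle_meet (x a b : H) : hle H x a -> hle H x b -> hle H x (hmeet H a b).
Proof. unfold hle; intros Ha Hb. rewrite hmeet_assoc, Ha. exact Hb. Qed.

Lemma hle_top (a : H) : hle H a (htop H).
Proof. apply hmeet_top. Qed.

Lemma hle_bot (a : H) : hle H (hbot H) a.
Proof.
  unfold hle. rewrite <- (hjoin_bot H a), hjoin_comm. apply hmeet_absorb.
Qed.

Lemma hle_join_l (a b : H) : hle H a (hjoin H a b).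
Proof. apply hmeet_absorb. Qed.

Lemma hle_join_r (a b : H) : hle H b (hjoin H a b).
Proof. rewrite hjoin_comm. apply hmeet_absorb. Qed.

Lemma hle_join (a b c : H) : hle H a c -> hle H b c -> hle H (hjoin H a b) c.
Proof.
  assert (hle_joinE : forall x y : H, hle H x y <-> hjoin H x y = y).
  { unfold hle; intros x y; split; intro E.
    - rewrite <- E, hjoin_comm, hmeet_comm. apply hjoin_absorb.
    - rewrite <- E. apply hmeet_absorb. }
  rewrite !hle_joinE. intros Hac Hbc. rewrite <- hjoin_assoc, Hbc. exact Hac.
Qed.

Lemma hle_residuation (a b c : H) : hle H (hmeet H a b) c <-> hle H a (himp H b c).
Proof. apply hresiduation. Qed.

Lemma hle_modus_ponens (a b : H) : hle H (hmeet H a (himp H a b)) b.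
Proof. rewrite hmeet_comm. apply hle_residuation, hle_refl. Qed.

Lemma hle_meet2 (a b a' b' : H) :
  hle H a a' -> hle H b b' -> hle H (hmeet H a b) (hmeet H a' b').
Proof.
  intros Ha Hb. apply hle_meet.
  - apply (hle_trans _ a); [apply hle_meet_l | exact Ha].
  - apply (hle_trans _ b); [apply hle_meet_r | exact Hb].
Qed.

Lemma hle_join2 (a b a' b' : H) :
  hle H a a' -> hle H b b' -> hle H (hjoin H a b) (hjoin H a' b').
Proof.
  intros Ha Hb. apply hle_join.
  - apply (hle_trans _ a'); [exact Ha | apply hle_join_l].
  - apply (hle_trans _ b'); [exact Hb | apply hle_join_r].
Qed.

Lemma hle_imp2 (a b a' b' : H) :
  hle H a' a -> hle H b b' -> hle H (himp H a b) (himp H a' b').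
Proof.
  intros Ha Hb. apply hle_residuation. apply (hle_trans _ b); [|exact Hb].
  apply (hle_trans _ (hmeet H a (himp H a b))); [|apply hle_modus_ponens].
  rewrite hmeet_comm. apply hle_meet2; [exact Ha | apply hle_refl].
Qed.

Lemma hle_meet_join_distr (a b c : H) :
  hle H (hmeet H a (hjoin H b c)) (hjoin H (hmeet H a b) (hmeet H a c)).
Proof.
  rewrite hmeet_comm. apply hle_residuation.
  apply hle_join; apply hle_residuation; rewrite hmeet_comm;
    [apply hle_join_l | apply hle_join_r].
Qed.

Lemma hmeet_neg (a : H) : hmeet H a (himp H a (hbot H)) = hbot H.
Proof. apply hle_antisym; [apply hle_modus_ponens | apply hle_bot]. Qed.

Lemma himp_top (a b : H) : hle H a b -> himp H a b = htop H.
Proof.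
  intros Hab. apply hle_antisym; [apply hle_top|]. apply hle_residuation.
  apply (hle_trans _ a); [apply hle_meet_r | exact Hab].
Qed.

End HeytingOrder.

Lemma pred_ext {T : Type} (A B : T -> Prop) : (forall x, A x <-> B x) -> A = B.
Proof.
  intros E. apply functional_extensionality; intro x. apply propositional_extensionality, E.
Qed.

Lemma Zorn_above (T : Type) (P : (T -> Prop) -> Prop) (K : T -> Prop) :
  P K ->
  (forall C : (T -> Prop) -> Prop, (forall A, C A -> P A) ->
     (forall A B, C A -> C B -> (forall x, A x -> B x) \/ (forall x, B x -> A x)) ->
     (exists A, C A) -> P (fun x => exists A, C A /\ A x)) ->
  exists A, P A /\ (forall x, K x -> A x) /\
    forall B, P B -> (forall x, A x -> B x) -> forall x, B x -> A x.
Proof.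
  intros PK Hchain.
  set (Big := fun A : T -> Prop => P A /\ forall x, K x -> A x).
  (* [Zorn_bigcup] also needs the union of the empty chain, hence "below [K] or above [K]". *)
  destruct (@classical_sets.Zorn_bigcup T (fun A : T -> Prop => (forall x, A x -> K x) \/ Big A))
    as [A [QA Amax]].
  - intros C CQ Ctot.
    destruct (classic (exists A0, C A0 /\ Big A0)) as [[A0 [CA0 [PA0 KA0]]] | Nbig].
    + right. split; [| intros x Kx; exists A0; auto].
      replace (classical_sets.bigcup C (fun X => X))
        with (fun x => exists A, (C A /\ Big A) /\ A x).
      * apply Hchain; [intros B [_ [PB _]]; exact PB | | exists A0; split; [|split]; auto].
        intros B1 B2 [C1 _] [C2 _]. exact (Ctot B1 B2 C1 C2).
      * apply pred_ext; intros x; split; [intros [B [[CB _] Bx]]; exists B; auto |].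
        intros [B CB Bx]. destruct (CQ B CB) as [BK | BB]; [| exists B; auto].
        exists A0. split; [split; [exact CA0 | split; auto] | apply KA0, BK, Bx].
    + left. intros x [B CB Bx]. destruct (CQ B CB) as [BK | BB]; [exact (BK x Bx) |].
      exfalso; apply Nbig; exists B; auto.
  - assert (BigA : Big A).
    { destruct QA as [AK | BigA]; [| exact BigA].
      destruct (classic (forall x, K x -> A x)) as [KA | NKA].
      + replace A with K; [split; auto | apply pred_ext; split; auto].
      + exfalso. apply (Amax K); [split; [exact AK | exact NKA] | right; split; auto]. }
    destruct BigA as [PA KA]. exists A. split; [exact PA | split; [exact KA |]].
    intros B PB AB x Bx. apply NNPP; intro NAx. apply (Amax B).
    + split; [exact AB | intro BA; exact (NAx (BA x Bx))].
    + right. split; auto.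
Qed.

Section Filters.
Variables (H : HA) (S : H -> Prop) (L : sym -> Prop).
Hypothesis HS : subreduct L H S.
Hypothesis HL : L SAnd.

Lemma S_nonempty : exists a, S a.
Proof. apply HS. Qed.

Lemma S_meet (a b : H) : S a -> S b -> S (hmeet H a b).
Proof. intros; apply HS; assumption. Qed.

Lemma S_join (a b : H) : L SOr -> S a -> S b -> S (hjoin H a b).
Proof. intros; apply HS; assumption. Qed.

Lemma S_imp (a b : H) : L SImp -> S a -> S b -> S (himp H a b).
Proof. intros; apply HS; assumption. Qed.

Lemma S_neg (a : H) : L SNeg -> S a -> S (himp H a (hbot H)).
Proof. intros; apply HS; assumption. Qed.

Lemma S_bot_of_neg : L SNeg -> S (hbot H).
Proof.
  intros LN. destruct S_nonempty as [s Ss].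
  rewrite <- (hmeet_neg H s). apply S_meet; [exact Ss | apply S_neg; auto].
Qed.

Lemma S_top_of_neg : L SNeg -> S (htop H).
Proof.
  intros LN. rewrite <- (himp_top H (hbot H) (hbot H) (hle_refl H _)).
  apply S_neg, S_bot_of_neg; exact LN.
Qed.

Lemma S_top_of_imp : L SImp -> S (htop H).
Proof.
  intros LI. destruct S_nonempty as [s Ss].
  rewrite <- (himp_top H s s (hle_refl H _)). apply S_imp; auto.
Qed.

Lemma S_eval (a : nat -> H) (f : fm) :
  (forall n, S (a n)) -> in_lang L f -> S (eval (HA_ops H) a f).
Proof.
  intros Sa. induction f; simpl; intros Hf.
  - apply Sa.
  - apply S_meet; tauto.
  - apply S_join; tauto.
  - apply S_imp; tauto.
  - apply S_neg; tauto.
  - apply HS, Hf.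
  - apply HS, Hf.
Qed.

Section FilterFacts.
Variable F : H -> Prop.
Hypothesis HF : filter H S F.

Lemma filter_sub (a : H) : F a -> S a.
Proof. apply HF. Qed.

Lemma filter_nonempty : exists a, F a.
Proof. apply HF. Qed.

Lemma filter_up (a b : H) : F a -> S b -> hle H a b -> F b.
Proof. apply HF. Qed.

Lemma filter_meet (a b : H) : F a -> F b -> F (hmeet H a b).
Proof. apply HF. Qed.

Lemma filter_top : S (htop H) -> F (htop H).
Proof.
  intros St. destruct filter_nonempty as [a Fa].
  apply (filter_up a); [exact Fa | exact St | apply hle_top].
Qed.

Lemma filter_nobot : (exists s, S s /\ ~ F s) -> ~ F (hbot H).
Proof. intros [s [Ss Fs]] Fb. apply Fs, (filter_up _ _ Fb Ss), hle_bot. Qed.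

End FilterFacts.

Lemma filter_inter_list (Gs : list (H -> Prop)) (t : H) :
  S t -> (forall G, In G Gs -> filter H S G) -> (forall G, In G Gs -> G t) ->
  filter H S (fun x => S x /\ forall G, In G Gs -> G x).
Proof.
  intros St HGs Gt. split; [intros x [Sx _]; exact Sx |].
  split; [exists t; split; assumption |]. split.
  - intros a b [Sa Ga] Sb Hab. split; [exact Sb |].
    intros G IG. apply (filter_up G (HGs G IG) a); [exact (Ga G IG) | exact Sb | exact Hab].
  - intros a b [Sa Ga] [Sb Gb]. split; [apply S_meet; assumption |].
    intros G IG. apply (filter_meet G (HGs G IG)); [exact (Ga G IG) | exact (Gb G IG)].
Qed.

Lemma filter_chain_union (C : (H -> Prop) -> Prop) :
  (forall G, C G -> filter H S G) ->
  (forall G J, C G -> C J -> (forall x, G x -> J x) \/ (forall x, J x -> G x)) ->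
  (exists G, C G) -> filter H S (fun x => exists G, C G /\ G x).
Proof.
  intros HC Ctot [G0 CG0]. split; [intros x [G [CG Gx]]; exact (filter_sub G (HC G CG) x Gx) |].
  split.
  { destruct (filter_nonempty G0 (HC G0 CG0)) as [a Ga]. exists a, G0; auto. }
  split.
  - intros a b [G [CG Ga]] Sb Hab. exists G.
    split; [exact CG | apply (filter_up G (HC G CG) a); auto].
  - intros a b [G [CG Ga]] [J [CJ Jb]].
    destruct (Ctot G J CG CJ) as [GJ | JG].
    + exists J. split; [exact CJ | apply filter_meet; auto].
    + exists G. split; [exact CG | apply filter_meet; auto].
Qed.

Definition down_directed (T : H -> Prop) : Prop :=
  forall t1 t2, T t1 -> T t2 -> exists t, T t /\ hle H t t1 /\ hle H t t2.

Definition up_directed (T : H -> Prop) : Prop :=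
  forall t1 t2, T t1 -> T t2 -> exists t, T t /\ hle H t1 t /\ hle H t2 t.

(* For down-directed [T], the filter generated by [F] and [T]. *)
Definition adjoin (F T : H -> Prop) : H -> Prop :=
  fun x => S x /\ exists k t, F k /\ T t /\ hle H (hmeet H k t) x.

Lemma adjoin_filter (F T : H -> Prop) :
  filter H S F -> (exists t, T t) -> (forall t, T t -> S t) -> down_directed T ->
  filter H S (adjoin F T).
Proof.
  intros HF [t0 Tt0] TS Tdir. destruct (filter_nonempty F HF) as [k0 Fk0].
  split; [intros x [Sx _]; exact Sx |]. split.
  { exists (hmeet H k0 t0).
    split; [apply S_meet; [exact (filter_sub F HF k0 Fk0) | exact (TS t0 Tt0)] |].
    exists k0, t0. split; [exact Fk0 | split; [exact Tt0 | apply hle_refl]]. }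
  split.
  - intros x y [Sx [k [t [Fk [Tt Hk]]]]] Sy Hxy. split; [exact Sy |].
    exists k, t. split; [exact Fk | split; [exact Tt | apply (hle_trans H _ x); assumption]].
  - intros x y [Sx [k [t [Fk [Tt Hk]]]]] [Sy [k' [t' [Fk' [Tt' Hk']]]]].
    split; [apply S_meet; assumption |].
    destruct (Tdir t t' Tt Tt') as [t'' [Tt'' [Ht Ht']]].
    exists (hmeet H k k'), t''. split; [apply filter_meet; assumption | split; [exact Tt'' |]].
    apply hle_meet.
    + apply (hle_trans H _ (hmeet H k t)); [| exact Hk].
      apply hle_meet2; [apply hle_meet_l | exact Ht].
    + apply (hle_trans H _ (hmeet H k' t')); [| exact Hk'].
      apply hle_meet2; [apply hle_meet_r | exact Ht'].
Qed.

Lemma adjoin1_filter (F : H -> Prop) (a : H) : filter H S F -> S a -> filter H S (adjoin F (eq a)).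
Proof.
  intros HF Sa. apply adjoin_filter; [exact HF | exists a; reflexivity | intros t <-; exact Sa |].
  intros t1 t2 <- <-. exists a. split; [reflexivity | split; apply hle_refl].
Qed.

Lemma adjoin_sub (F T : H -> Prop) (x : H) : filter H S F -> (exists t, T t) -> F x -> adjoin F T x.
Proof.
  intros HF [t Tt] Fx. split; [exact (filter_sub F HF x Fx) |].
  exists x, t. split; [exact Fx | split; [exact Tt | apply hle_meet_l]].
Qed.

Lemma adjoin_elem (F T : H -> Prop) (t : H) : filter H S F -> S t -> T t -> adjoin F T t.
Proof.
  intros HF St Tt. split; [exact St |]. destruct (filter_nonempty F HF) as [k Fk].
  exists k, t. split; [exact Fk | split; [exact Tt | apply hle_meet_r]].
Qed.

Lemma mi_filter (F : H -> Prop) : meet_irreducible H S F -> filter H S F.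
Proof. intros [HF _]; exact HF. Qed.

Lemma mi_proper (F : H -> Prop) : meet_irreducible H S F -> exists s, S s /\ ~ F s.
Proof. intros [_ [Hp _]]; exact Hp. Qed.

Lemma mi_split (F G J : H -> Prop) :
  meet_irreducible H S F -> filter H S G -> filter H S J -> (forall x, F x <-> G x /\ J x) ->
  (forall x, G x -> F x) \/ (forall x, J x -> F x).
Proof.
  intros [_ [_ Hirr]] HG HJ E.
  destruct (classic (G = F)) as [-> | NG]; [left; auto |].
  destruct (classic (J = F)) as [-> | NJ]; [right; auto |].
  exfalso. apply Hirr. exists G, J. do 4 (split; [assumption |]). apply pred_ext, E.
Qed.

Lemma mi_adjoin (F : H -> Prop) (a b : H) :
  meet_irreducible H S F -> S a -> S b -> ~ F a -> ~ F b ->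
  exists x k1 k2, S x /\ ~ F x /\ F k1 /\ F k2 /\
    hle H (hmeet H k1 a) x /\ hle H (hmeet H k2 b) x.
Proof.
  intros HF Sa Sb Fa Fb. pose proof (mi_filter F HF) as HF'.
  apply NNPP; intro Nx.
  destruct (mi_split F (adjoin F (eq a)) (adjoin F (eq b)) HF) as [E | E].
  - apply adjoin1_filter; assumption.
  - apply adjoin1_filter; assumption.
  - intros x; split; [intros Fx; split; apply adjoin_sub; eauto |].
    intros [[Sx [k1 [? [Fk1 [<- Hk1]]]]] [_ [k2 [? [Fk2 [<- Hk2]]]]]].
    apply NNPP; intro Fx. apply Nx. exists x, k1, k2. tauto.
  - apply Fa, E, adjoin_elem; auto.
  - apply Fb, E, adjoin_elem; auto.
Qed.

Lemma mi_join_prime (F : H -> Prop) (a b : H) :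
  meet_irreducible H S F -> L SOr -> S a -> S b -> F (hjoin H a b) -> F a \/ F b.
Proof.
  intros HF LO Sa Sb Fab. pose proof (mi_filter F HF) as HF'.
  apply NNPP; intro N. apply not_or_and in N. destruct N as [Fa Fb].
  destruct (mi_adjoin F a b HF Sa Sb Fa Fb) as [x [k1 [k2 [Sx [Fx [Fk1 [Fk2 [Hk1 Hk2]]]]]]]].
  apply Fx. apply (filter_up F HF' (hmeet H (hmeet H k1 k2) (hjoin H a b))).
  - apply filter_meet; [| apply filter_meet |]; assumption.
  - exact Sx.
  - apply (hle_trans H _ _ _ (hle_meet_join_distr H _ _ _)). apply hle_join.
    + apply (hle_trans H _ (hmeet H k1 a)); [| exact Hk1].
      apply hle_meet2; [apply hle_meet_l | apply hle_refl].
    + apply (hle_trans H _ (hmeet H k2 b)); [| exact Hk2].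
      apply hle_meet2; [apply hle_meet_r | apply hle_refl].
Qed.

Definition prime_above (F B : H -> Prop) : Prop :=
  forall G J, filter H S G -> filter H S J -> (forall x, B x -> G x) -> (forall x, B x -> J x) ->
    (forall x, G x -> J x -> F x) -> (forall x, G x -> F x) \/ (forall x, J x -> F x).

Lemma prime_above_intro (F : H -> Prop) :
  (forall G J g j, filter H S G -> filter H S J -> G g -> J j -> ~ F g -> ~ F j ->
     (forall x, G x -> J x -> F x) -> False) ->
  prime_above F (fun _ => False).
Proof.
  intros Hcontra G J HG HJ _ _ GJF.
  destruct (classic (forall x, G x -> F x)) as [GF | NGF]; [left; exact GF |].
  destruct (classic (forall x, J x -> F x)) as [JF | NJF]; [right; exact JF |].
  apply not_all_ex_not in NGF as [g Hg]. apply imply_to_and in Hg as [Gg Fg].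
  apply not_all_ex_not in NJF as [j Hj]. apply imply_to_and in Hj as [Jj Fj].
  exfalso. exact (Hcontra G J g j HG HJ Gg Jj Fg Fj GJF).
Qed.

Lemma mi_prime_above_self (F : H -> Prop) : meet_irreducible H S F -> prime_above F F.
Proof.
  intros HF G J HG HJ FG FJ GJF. apply (mi_split F G J HF HG HJ).
  intros x; split; [auto | intros [Gx Jx]; auto].
Qed.

(* If [k /\ g <= x] and [k /\ j <= x] then [k -> x] lies in both filters. *)
Lemma mi_prime_of_imp (F : H -> Prop) :
  meet_irreducible H S F -> L SImp -> prime_above F (fun _ => False).
Proof.
  intros HF LI. pose proof (mi_filter F HF) as HF'.
  apply prime_above_intro. intros G J g j HG HJ Gg Jj Fg Fj GJF.
  assert (Sg : S g) by exact (filter_sub G HG g Gg).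
  assert (Sj : S j) by exact (filter_sub J HJ j Jj).
  destruct (mi_adjoin F g j HF Sg Sj Fg Fj) as [x [k1 [k2 [Sx [Fx [Fk1 [Fk2 [Hk1 Hk2]]]]]]]].
  set (k := hmeet H k1 k2).
  assert (Fk : F k) by (apply filter_meet; assumption).
  assert (Sk : S k) by exact (filter_sub F HF' k Fk).
  assert (Fkx : F (himp H k x)).
  { apply GJF.
    - apply (filter_up G HG g _ Gg); [apply S_imp; assumption |].
      apply hle_residuation. rewrite hmeet_comm.
      apply (hle_trans H _ (hmeet H k1 g)); [| exact Hk1].
      apply hle_meet2; [apply hle_meet_l | apply hle_refl].
    - apply (filter_up J HJ j _ Jj); [apply S_imp; assumption |].
      apply hle_residuation. rewrite hmeet_comm.
      apply (hle_trans H _ (hmeet H k2 j)); [| exact Hk2].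
      apply hle_meet2; [apply hle_meet_r | apply hle_refl]. }
  apply Fx, (filter_up F HF' (hmeet H k (himp H k x)));
    [apply filter_meet | | apply hle_modus_ponens]; assumption.
Qed.

Definition maximal_filter (M : H -> Prop) : Prop :=
  filter H S M /\ ~ M (hbot H) /\
  forall G, filter H S G -> (forall x, M x -> G x) -> ~ G (hbot H) -> forall x, G x -> M x.

Lemma maximal_filter_neg (M : H -> Prop) (g : H) :
  L SNeg -> maximal_filter M -> S g -> ~ M g -> M (himp H g (hbot H)).
Proof.
  intros LN [HM [Mb Mmax]] Sg Mg.
  destruct (classic (adjoin M (eq g) (hbot H))) as [[_ [k [? [Mk [<- Hk]]]]] | Nb].
  - apply (filter_up M HM k _ Mk); [apply S_neg; assumption | apply hle_residuation, Hk].
  - exfalso. apply Mg, (Mmax (adjoin M (eq g)));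
      [apply adjoin1_filter | intros x; apply adjoin_sub | | apply adjoin_elem]; eauto.
Qed.

(* With [t := ~g /\ ~j] in [M], [~t] lies above [g] and above [j]. *)
Lemma maximal_prime_of_neg (M : H -> Prop) :
  maximal_filter M -> L SNeg -> prime_above M (fun _ => False).
Proof.
  intros HM LN. pose proof HM as [HM' [Mb _]].
  apply prime_above_intro. intros G J g j HG HJ Gg Jj Mg Mj GJM.
  assert (Sg : S g) by exact (filter_sub G HG g Gg).
  assert (Sj : S j) by exact (filter_sub J HJ j Jj).
  set (t := hmeet H (himp H g (hbot H)) (himp H j (hbot H))).
  assert (Mt : M t) by (apply (filter_meet M HM'); apply maximal_filter_neg; assumption).
  assert (Snt : S (himp H t (hbot H))) by exact (S_neg _ LN (filter_sub M HM' t Mt)).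
  assert (Mnt : M (himp H t (hbot H))).
  { apply GJM.
    - apply (filter_up G HG g _ Gg Snt). apply hle_residuation.
      apply (hle_trans H _ _ _ (hle_meet2 H _ _ _ _ (hle_refl H g) (hle_meet_l H _ _))).
      apply hle_modus_ponens.
    - apply (filter_up J HJ j _ Jj Snt). apply hle_residuation.
      apply (hle_trans H _ _ _ (hle_meet2 H _ _ _ _ (hle_refl H j) (hle_meet_r H _ _))).
      apply hle_modus_ponens. }
  apply Mb. rewrite <- (hmeet_neg H t). apply filter_meet; assumption.
Qed.

Lemma prime_above_list (F B : H -> Prop) (Gs : list (H -> Prop)) :
  (exists s, S s /\ ~ F s) -> (forall x, B x -> S x) -> (Gs = [] \/ prime_above F B) ->
  (forall G, In G Gs -> filter H S G /\ forall x, B x -> G x) ->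
  (exists t, S t /\ forall G, In G Gs -> G t) ->
  (forall x, S x -> (forall G, In G Gs -> G x) -> F x) ->
  exists G, In G Gs /\ forall x, G x -> F x.
Proof.
  intros [s [Ss Fs]] BS. induction Gs as [| G Gs IH]; intros Hprime HGs [t [St Gt]] Hinter.
  { exfalso. apply Fs, Hinter; [exact Ss | intros G []]. }
  destruct Hprime as [[=] | Hprime].
  set (J := fun x => S x /\ forall G', In G' Gs -> G' x).
  assert (HJ : filter H S J).
  { apply (filter_inter_list Gs t St); intros G' I; [apply HGs | apply Gt]; right; exact I. }
  destruct (HGs G (or_introl eq_refl)) as [HG BG].
  destruct (Hprime G J HG HJ BG) as [GF | JF].
  - intros x Bx. split; [exact (BS x Bx) | intros G' I; apply HGs; [right; exact I | exact Bx]].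
  - intros x Gx [Sx Jx]. apply Hinter; [exact Sx |].
    intros G' [<- | I]; [exact Gx | exact (Jx G' I)].
  - exists G. split; [left; reflexivity | exact GF].
  - destruct IH as [G' [I G'F]].
    + right; exact Hprime.
    + intros G' I; apply HGs; right; exact I.
    + exists t. split; [exact St | intros G' I; apply Gt; right; exact I].
    + intros x Sx Gsx. exact (JF x (conj Sx Gsx)).
    + exists G'. split; [right; exact I | exact G'F].
Qed.

Lemma maximal_disjoint_filter (K D : H -> Prop) :
  filter H S K -> (forall x, K x -> ~ D x) ->
  exists G, filter H S G /\ (forall x, K x -> G x) /\ (forall x, G x -> ~ D x) /\
    forall G', filter H S G' -> (forall x, G x -> G' x) -> (forall x, G' x -> ~ D x) ->
      forall x, G' x -> G x.
Proof.
  intros HK KD.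
  destruct (@Zorn_above _ (fun G : H -> Prop => filter H S G /\ forall x, G x -> ~ D x) K)
    as [G [[HG GD] [KG Gmax]]].
  - split; assumption.
  - intros C HC Ctot Cne. split.
    + apply filter_chain_union; [intros G CG; apply HC, CG | exact Ctot | exact Cne].
    + intros x [G [CG Gx]]. exact (proj2 (HC G CG) x Gx).
  - exists G. split; [exact HG | split; [exact KG | split; [exact GD |]]].
    intros G' HG' GG' G'D. apply Gmax; [split |]; assumption.
Qed.

Lemma mi_of_maximal_disjoint (G D : H -> Prop) :
  filter H S G -> (forall x, G x -> ~ D x) ->
  (forall G', filter H S G' -> (forall x, G x -> G' x) -> (forall x, G' x -> ~ D x) ->
     forall x, G' x -> G x) ->
  (forall x, D x -> S x) -> (exists d, D d) ->
  up_directed D ->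
  meet_irreducible H S G.
Proof.
  intros HG GD Gmax DS [d0 Dd0] Ddir.
  split; [exact HG | split].
  { exists d0. split; [exact (DS d0 Dd0) | intro Gd0; exact (GD d0 Gd0 Dd0)]. }
  intros [G1 [G2 [HG1 [HG2 [NG1 [NG2 E]]]]]].
  assert (meets_D : forall G', filter H S G' -> G' <> G -> (forall x, G x -> G' x) ->
            exists x, G' x /\ D x).
  { intros G' HG' NG' GG'. apply NNPP; intro N. apply NG', pred_ext. intros x; split.
    - apply (Gmax G' HG' GG'). intros y G'y Dy. apply N. exists y; auto.
    - apply GG'. }
  assert (GG1 : forall x, G x -> G1 x) by (intros x; rewrite E; tauto).
  assert (GG2 : forall x, G x -> G2 x) by (intros x; rewrite E; tauto).
  destruct (meets_D G1 HG1 NG1 GG1) as [x1 [G1x1 Dx1]].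
  destruct (meets_D G2 HG2 NG2 GG2) as [x2 [G2x2 Dx2]].
  destruct (Ddir x1 x2 Dx1 Dx2) as [d [Dd [Hd1 Hd2]]].
  apply (GD d); [| exact Dd]. rewrite E. split.
  - exact (filter_up G1 HG1 x1 d G1x1 (DS d Dd) Hd1).
  - exact (filter_up G2 HG2 x2 d G2x2 (DS d Dd) Hd2).
Qed.

Lemma exists_mi_avoiding (K D : H -> Prop) :
  filter H S K -> (forall x, K x -> ~ D x) ->
  (forall x, D x -> S x) -> (exists d, D d) ->
  up_directed D ->
  exists G, meet_irreducible H S G /\ (forall x, K x -> G x) /\ (forall x, G x -> ~ D x).
Proof.
  intros HK KD DS Dne Ddir.
  destruct (maximal_disjoint_filter K D HK KD) as [G [HG [KG [GD Gmax]]]].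
  exists G. split; [apply (mi_of_maximal_disjoint G D); assumption | split; assumption].
Qed.

Lemma exists_maximal_filter (K : H -> Prop) :
  L SNeg -> filter H S K -> ~ K (hbot H) ->
  exists M, meet_irreducible H S M /\ maximal_filter M /\ forall x, K x -> M x.
Proof.
  intros LN HK Kb.
  destruct (maximal_disjoint_filter K (fun x => x = hbot H) HK) as [M [HM [KM [MD Mmax]]]].
  { intros x Kx ->. exact (Kb Kx). }
  exists M. split; [| split; [split; [exact HM | split] | exact KM]].
  - apply (mi_of_maximal_disjoint M (fun x => x = hbot H)); try assumption.
    + intros x ->. apply S_bot_of_neg, LN.
    + exists (hbot H); reflexivity.
    + intros d1 d2 -> ->. exists (hbot H). split; [reflexivity | split; apply hle_refl].
  - intro Mb. exact (MD _ Mb eq_refl).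
  - intros G HG MG Gb. apply (Mmax G HG MG). intros x Gx ->. exact (Gb Gx).
Qed.

Lemma mi_outside_adjoins (F : H -> Prop) (bs : list H) : meet_irreducible H S F ->
  (forall b, In b bs -> S b /\ ~ F b) ->
  exists z, S z /\ ~ F z /\ forall b, In b bs -> adjoin F (eq b) z.
Proof.
  intros HF Hbs. pose proof (mi_filter F HF) as HF'.
  apply NNPP; intro Nz.
  destruct (prime_above_list F F (map (fun b => adjoin F (eq b)) bs)) as [G [IG GF]].
  - exact (mi_proper F HF).
  - exact (filter_sub F HF').
  - right. exact (mi_prime_above_self F HF).
  - intros G IG. apply in_map_iff in IG as [b [<- Ib]].
    split; [apply adjoin1_filter, Hbs | intros x Fx; apply adjoin_sub]; eauto.
  - destruct (filter_nonempty F HF') as [k Fk]. exists k. split; [exact (filter_sub F HF' k Fk) |].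
    intros G IG. apply in_map_iff in IG as [b [<- Ib]]. apply adjoin_sub; eauto.
  - intros x Sx Hx. apply NNPP; intro Fx. apply Nz. exists x.
    split; [exact Sx | split; [exact Fx |]].
    intros b Ib. apply Hx, in_map_iff. exists b. auto.
  - apply in_map_iff in IG as [b [<- Ib]].
    apply (proj2 (Hbs b Ib)), GF, adjoin_elem; [exact HF' | apply Hbs, Ib | reflexivity].
Qed.

Lemma filter_common_lower (F : H -> Prop) (bs : list H) (z : H) : filter H S F ->
  (forall b, In b bs -> exists k, F k /\ hle H (hmeet H k b) z) ->
  exists y, F y /\ forall b, In b bs -> hle H (hmeet H b y) z.
Proof.
  intros HF. induction bs as [| b bs IH]; intros Hk.
  { destruct (filter_nonempty F HF) as [y Fy]. exists y. split; [exact Fy | intros b []]. }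
  destruct (Hk b (or_introl eq_refl)) as [k [Fk Hkb]].
  destruct IH as [y [Fy Hy]]; [intros b' I; apply Hk; right; exact I |].
  exists (hmeet H k y). split; [apply filter_meet; assumption |]. intros b' [<- | I].
  - apply (hle_trans H _ (hmeet H k b)); [| exact Hkb].
    rewrite hmeet_comm. apply hle_meet2; [apply hle_meet_l | apply hle_refl].
  - apply (hle_trans H _ (hmeet H b' y)); [| exact (Hy b' I)].
    apply hle_meet2; [apply hle_refl | apply hle_meet_r].
Qed.

Lemma separating_pair (F : H -> Prop) (bs : list H) : meet_irreducible H S F ->
  (forall b, In b bs -> S b /\ ~ F b) ->
  exists y z, S y /\ S z /\ (forall b, In b bs -> hle H (hmeet H b y) z) /\ ~ hle H y z.
Proof.
  intros HF Hbs. pose proof (mi_filter F HF) as HF'.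
  destruct (mi_outside_adjoins F bs HF Hbs) as [z [Sz [Fz Hz]]].
  destruct (filter_common_lower F bs z HF') as [y [Fy Hy]].
  { intros b Ib. destruct (Hz b Ib) as [_ [k [b' [Fk [<- Hk]]]]]. exists k. auto. }
  exists y, z. split; [exact (filter_sub F HF' y Fy) | split; [exact Sz | split; [exact Hy |]]].
  intros yz. exact (Fz (filter_up F HF' y z Fy Sz yz)).
Qed.

End Filters.

Section Points.
Variables (H : HA) (S : H -> Prop).

Notation X := (Astar H S).
Notation Xle := (Astar_le H S).
Notation upval W f := (eval (Up_ops Xle) W f).

Definition pt (K : X) : H -> Prop := proj1_sig K.

Lemma pt_mi (K : X) : meet_irreducible H S (pt K).
Proof. exact (proj2_sig K). Qed.

Lemma pt_filter (K : X) : filter H S (pt K).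
Proof. exact (mi_filter H S _ (pt_mi K)). Qed.

Lemma pt_proper (K : X) : exists s, S s /\ ~ pt K s.
Proof. exact (mi_proper H S _ (pt_mi K)). Qed.

Lemma pt_nobot (K : X) : ~ pt K (hbot H).
Proof. exact (filter_nobot H S _ (pt_filter K) (pt_proper K)). Qed.

Lemma pt_sub (K : X) (x : H) : pt K x -> S x.
Proof. exact (filter_sub H S _ (pt_filter K) x). Qed.

Lemma pt_up (K : X) (x y : H) : pt K x -> S y -> hle H x y -> pt K y.
Proof. exact (filter_up H S _ (pt_filter K) x y). Qed.

Lemma pt_meet (K : X) (x y : H) : pt K x -> pt K y -> pt K (hmeet H x y).
Proof. exact (filter_meet H S _ (pt_filter K) x y). Qed.

Lemma Xle_trans (K1 K2 K3 : X) : Xle K1 K2 -> Xle K2 K3 -> Xle K1 K3.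
Proof. unfold Astar_le; auto. Qed.

Lemma up_imp_upset (U U' : X -> Prop) : is_upset Xle (up_imp Xle U U').
Proof.
  intros K K' HK KK' [G [K'G UG]]. apply HK.
  exists G. split; [exact (Xle_trans _ _ _ KK' K'G) | exact UG].
Qed.

Lemma upval_upset (W : nat -> X -> Prop) (f : fm) :
  (forall n, is_upset Xle (W n)) -> is_upset Xle (upval W f).
Proof.
  intros HW. induction f; simpl.
  - apply HW.
  - intros K K' [A B] KK'. split; [apply (IHf1 K) | apply (IHf2 K)]; assumption.
  - intros K K' [A | B] KK'; [left; apply (IHf1 K) | right; apply (IHf2 K)]; assumption.
  - apply up_imp_upset.
  - apply up_imp_upset.
  - intros K K' [].
  - intros K K' _ _. exact I.
Qed.

Lemma upval_polar_mono (W V : nat -> X -> Prop) :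
  (forall n K, W n K -> V n K) -> forall f p, polar p f -> forall K,
  if p then (upval W f K -> upval V f K) else (upval V f K -> upval W f K).
Proof.
  intros WV f.
  induction f; intros p Hp K; destruct p; simpl in Hp |- *; try discriminate;
    repeat match goal with
    | Hp : _ /\ _ |- _ => destruct Hp
    | IH : forall p, polar p ?g -> _, Hg : polar ?q ?g |- _ =>
        specialize (IH q Hg); simpl in IH
    end; unfold up_imp in *; firstorder.
Qed.

Lemma maximal_point_top (M K : X) : maximal_filter H S (pt M) -> Xle M K -> Xle K M.
Proof.
  intros [_ [_ Mmax]] MK x Kx. exact (Mmax (pt K) (pt_filter K) MK (pt_nobot K) x Kx).
Qed.

Lemma up_imp_at_maximal (M : X) (U U' : X -> Prop) :
  maximal_filter H S (pt M) -> is_upset Xle U -> is_upset Xle U' ->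
  (up_imp Xle U U' M <-> (U M -> U' M)).
Proof.
  intros HM HU HU'. split.
  - intros Hi UM. apply NNPP; intro N. apply Hi.
    exists M. split; [intros x; auto | split; assumption].
  - intros Hi [K [MK [UK NK]]]. apply NK, (HU' M K); [| exact MK].
    apply Hi, (HU K M UK), maximal_point_top; assumption.
Qed.

Lemma upval_polar_mono_at_maximal (W V : nat -> X -> Prop) :
  (forall n, is_upset Xle (W n)) -> (forall n, is_upset Xle (V n)) ->
  (forall n M, maximal_filter H S (pt M) -> W n M -> V n M) ->
  forall f p, polar p f -> forall M, maximal_filter H S (pt M) ->
  if p then (upval W f M -> upval V f M) else (upval V f M -> upval W f M).
Proof.
  intros HW HV WV f. induction f; intros p Hp M HM; destruct p; simpl in Hp |- *; try discriminate;
    repeat match goal with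
    | Hp : _ /\ _ |- _ => destruct Hp
    | IH : forall p, polar p ?g -> _, Hg : polar ?q ?g |- _ =>
        specialize (IH q Hg M HM); simpl in IH
    end;
    try rewrite !up_imp_at_maximal by (auto using upval_upset; intros ? ? []);
    first [exact (WV n M HM) | tauto].
Qed.

End Points.

Section Approximation.
Variables (H : HA) (S : H -> Prop) (L : sym -> Prop).
Hypothesis HS : subreduct L H S.
Hypothesis HL : L SAnd.

Notation X := (Astar H S).
Notation Xle := (Astar_le H S).
Notation pt := (pt H S).
Notation upval W f := (eval (Up_ops Xle) W f).
Notation hval a f := (eval (HA_ops H) a f).

Definition assign_le (a b : nat -> H) : Prop := forall n, hle H (a n) (b n).

Lemma hval_polar_mono (a b : nat -> H) : assign_le a b -> forall f p, polar p f ->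
  if p then hle H (hval a f) (hval b f) else hle H (hval b f) (hval a f).
Proof.
  intros Hab f. induction f; intros p Hp; destruct p; simpl in Hp |- *; try discriminate;
    repeat match goal with
    | Hp : _ /\ _ |- _ => destruct Hp
    | IH : forall p, polar p ?g -> _, Hg : polar ?q ?g |- _ => specialize (IH q Hg); simpl in IH
    end;
    auto using hle_refl, hle_meet2, hle_join2, hle_imp2.
Qed.

Variable D : (nat -> H) -> Prop.
Hypothesis D_nonempty : exists a, D a.
Hypothesis D_directed : forall a b, D a -> D b -> exists c, D c /\ assign_le c a /\ assign_le c b.
Hypothesis D_S : forall a, D a -> forall n, S (a n).

Definition eventually (P : (nat -> H) -> Prop) : Prop :=
  exists a0, D a0 /\ forall a, D a -> assign_le a a0 -> P a.

Lemma eventually_always (P : (nat -> H) -> Prop) : (forall a, D a -> P a) -> eventually P.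
Proof. intros HP. destruct D_nonempty as [a0 Da0]. exists a0. split; auto. Qed.

Lemma eventually_mono (P Q : (nat -> H) -> Prop) :
  (forall a, D a -> P a -> Q a) -> eventually P -> eventually Q.
Proof. intros PQ [a0 [Da0 P0]]. exists a0. split; auto. Qed.

Lemma eventually_and (P Q : (nat -> H) -> Prop) :
  eventually P -> eventually Q -> eventually (fun a => P a /\ Q a).
Proof.
  intros [a1 [Da1 P1]] [a2 [Da2 Q2]]. destruct (D_directed a1 a2 Da1 Da2) as [c [Dc [c1 c2]]].
  exists c. split; [exact Dc |]. intros a Da ac.
  split; [apply P1 | apply Q2]; auto; intros n; eapply hle_trans; eauto.
Qed.

Lemma eventually_witness (P : (nat -> H) -> Prop) : eventually P -> exists a, D a /\ P a.
Proof.
  intros [a0 [Da0 P0]]. exists a0.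
  split; [exact Da0 | apply P0; [exact Da0 | intros n; apply hle_refl]].
Qed.

Definition induced_val (n : nat) (K : X) : Prop := forall a, D a -> pt K (a n).

Lemma induced_val_upset (n : nat) : is_upset Xle (induced_val n).
Proof. intros K K' HK KK' a Da. apply KK', HK, Da. Qed.

Definition S_closed (f : fm) : Prop := forall a, D a -> S (hval a f).

Lemma S_closed_of_lang (f : fm) : in_lang L f -> S_closed f.
Proof. intros Hf a Da. apply (S_eval H S L HS HL), Hf. apply D_S, Da. Qed.

Lemma S_closed_bot : L SNeg -> S_closed Bot.
Proof. intros LN a _. apply (S_bot_of_neg H S L HS HL LN). Qed.

Definition approx_out (f : fm) : Prop :=
  forall K : X, ~ upval induced_val f K -> eventually (fun a => ~ pt K (hval a f)).

Definition approx_in (f : fm) : Prop :=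
  forall K : X, upval induced_val f K -> eventually (fun a => pt K (hval a f)).

Lemma approx_out_var (n : nat) : approx_out (Var n).
Proof.
  intros K N. apply not_all_ex_not in N as [a0 N]. apply imply_to_and in N as [Da0 N].
  exists a0. split; [exact Da0 |]. intros a Da aa0 Ka. apply N, (pt_up H S K (a n)); auto.
Qed.

Lemma approx_in_var (n : nat) : approx_in (Var n).
Proof. intros K Hn. apply eventually_always, Hn. Qed.

Lemma approx_out_bot : approx_out Bot.
Proof. intros K _. apply eventually_always. intros a _. apply pt_nobot. Qed.

Lemma approx_in_bot : approx_in Bot.
Proof. intros K []. Qed.

Lemma approx_out_top : approx_out Top.
Proof. intros K N. exfalso. exact (N I). Qed.

Lemma approx_in_top : S (htop H) -> approx_in Top.
Proof.
  intros St K _. apply eventually_always. intros a _. exact (filter_top H S _ (pt_filter H S K) St).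
Qed.

Lemma approx_out_and (f1 f2 : fm) : S_closed f1 -> S_closed f2 ->
  approx_out f1 -> approx_out f2 -> approx_out (And f1 f2).
Proof.
  intros S1 S2 A1 A2 K N. simpl in N. apply not_and_or in N as [N | N].
  - generalize (A1 K N). apply eventually_mono. intros a Da Na Ka.
    exact (Na (pt_up H S K _ _ Ka (S1 a Da) (hle_meet_l H _ _))).
  - generalize (A2 K N). apply eventually_mono. intros a Da Na Ka.
    exact (Na (pt_up H S K _ _ Ka (S2 a Da) (hle_meet_r H _ _))).
Qed.

Lemma approx_in_and (f1 f2 : fm) : approx_in f1 -> approx_in f2 -> approx_in (And f1 f2).
Proof.
  intros A1 A2 K [K1 K2]. generalize (eventually_and _ _ (A1 K K1) (A2 K K2)).
  apply eventually_mono. intros a _ [Ka1 Ka2]. exact (pt_meet H S K _ _ Ka1 Ka2).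
Qed.

Lemma approx_out_or (f1 f2 : fm) : L SOr -> S_closed f1 -> S_closed f2 ->
  approx_out f1 -> approx_out f2 -> approx_out (Or f1 f2).
Proof.
  intros LO S1 S2 A1 A2 K N. simpl in N. apply not_or_and in N as [N1 N2].
  generalize (eventually_and _ _ (A1 K N1) (A2 K N2)). apply eventually_mono.
  intros a Da [Na1 Na2] K12.
  destruct (mi_join_prime H S L HS HL _ _ _ (pt_mi H S K) LO (S1 a Da) (S2 a Da) K12); auto.
Qed.

Lemma approx_in_or (f1 f2 : fm) : S_closed (Or f1 f2) ->
  approx_in f1 -> approx_in f2 -> approx_in (Or f1 f2).
Proof.
  intros S12 A1 A2 K [K1 | K2].
  - generalize (A1 K K1). apply eventually_mono. intros a Da Ka.
    exact (pt_up H S K _ _ Ka (S12 a Da) (hle_join_l H _ _)).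
  - generalize (A2 K K2). apply eventually_mono. intros a Da Ka.
    exact (pt_up H S K _ _ Ka (S12 a Da) (hle_join_r H _ _)).
Qed.

Lemma approx_out_imp (f1 f2 : fm) : S_closed f2 ->
  approx_in f1 -> approx_out f2 -> approx_out (Imp f1 f2).
Proof.
  intros S2 A1 A2 K N. apply NNPP in N as [G [KG [G1 G2]]].
  generalize (eventually_and _ _ (A1 G G1) (A2 G G2)). apply eventually_mono.
  intros a Da [Ga1 Na2] K12.
  apply Na2, (pt_up H S G (hmeet H (hval a f1) (hval a (Imp f1 f2))));
    [apply pt_meet; [exact Ga1 | apply KG, K12] | exact (S2 a Da) | apply hle_modus_ponens].
Qed.

Section Separation.
Variables (f1 f2 : fm).
Hypotheses (S1 : S_closed f1) (S2 : S_closed f2) (S12 : S_closed (Imp f1 f2)).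
Hypotheses (P1 : polar true f1) (P2 : polar false f2).

Let f1_mono (a c : nat -> H) : assign_le c a -> hle H (hval c f1) (hval a f1).
Proof. intros ca. exact (hval_polar_mono c a ca f1 true P1). Qed.

Let f2_anti (a c : nat -> H) : assign_le c a -> hle H (hval a f2) (hval c f2).
Proof. intros ca. exact (hval_polar_mono c a ca f2 false P2). Qed.

(* Zorn's lemma, applied to the filter generated by [K] and the values of [f1], avoiding the
   values of [f2]. *)
Lemma exists_point_separating (K : X) :
  (forall a, D a -> ~ pt K (hval a (Imp f1 f2))) ->
  exists G : X, Xle K G /\
    (forall a, D a -> pt G (hval a f1)) /\ (forall a, D a -> ~ pt G (hval a f2)).
Proof.
  intros NK. pose proof (pt_filter H S K) as HK.
  set (T1 := fun x => exists a, D a /\ x = hval a f1).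
  set (T2 := fun x => exists a, D a /\ x = hval a f2).
  assert (T1ne : exists x, T1 x) by (destruct D_nonempty as [a Da]; exists (hval a f1), a; auto).
  assert (T1S : forall x, T1 x -> S x) by (intros x [a [Da ->]]; auto).
  assert (T1dir : down_directed H T1).
  { intros x1 x2 [a1 [Da1 ->]] [a2 [Da2 ->]].
    destruct (D_directed a1 a2 Da1 Da2) as [c [Dc [c1 c2]]].
    exists (hval c f1). split; [exists c; auto | split; apply f1_mono; assumption]. }
  destruct (exists_mi_avoiding H S (adjoin H S (pt K) T1) T2) as [G [HG [KG GT2]]].
  - apply (adjoin_filter H S L HS HL); assumption.
  - intros x [Sx [k [y [Kk [[a [Da ->]] Hk]]]]] [b [Db ->]].
    destruct (D_directed a b Da Db) as [c [Dc [ca cb]]].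
    apply (NK c Dc), (pt_up H S K k _ Kk (S12 c Dc)), hle_residuation.
    apply (hle_trans H _ (hmeet H k (hval a f1))).
    { apply hle_meet2; [apply hle_refl | apply f1_mono; assumption]. }
    apply (hle_trans H _ (hval b f2)); [exact Hk | apply f2_anti; assumption].
  - intros x [a [Da ->]]. apply S2, Da.
  - destruct D_nonempty as [a Da]. exists (hval a f2), a; auto.
  - intros x1 x2 [a1 [Da1 ->]] [a2 [Da2 ->]].
    destruct (D_directed a1 a2 Da1 Da2) as [c [Dc [c1 c2]]].
    exists (hval c f2). split; [exists c; auto | split; apply f2_anti; assumption].
  - exists (exist _ G HG). split; [| split].
    + intros x Kx. apply KG, adjoin_sub; assumption.
    + intros a Da. apply KG, adjoin_elem; [exact HK | apply S1, Da | exists a; auto].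
    + intros a Da Ga. apply (GT2 _ Ga). exists a; auto.
Qed.

Lemma approx_in_imp : approx_out f1 -> approx_in f2 -> approx_in (Imp f1 f2).
Proof.
  intros A1 A2 K Hi.
  destruct (classic (exists a0, D a0 /\ pt K (hval a0 (Imp f1 f2)))) as [[a0 [Da0 K0]] | N].
  - exists a0. split; [exact Da0 |]. intros a Da aa0.
    apply (pt_up H S K _ _ K0 (S12 a Da)), hle_imp2; [apply f1_mono | apply f2_anti]; exact aa0.
  - exfalso. destruct (exists_point_separating K) as [G [KG [G1 G2]]].
    { intros a Da Ka. apply N. exists a; auto. }
    apply Hi. exists G. split; [exact KG | split].
    + apply NNPP; intro N1. destruct (eventually_witness _ (A1 G N1)) as [a [Da Na]].
      exact (Na (G1 a Da)).
    + intro N2. destruct (eventually_witness _ (A2 G N2)) as [a [Da Ka]]. exact (G2 a Da Ka).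
Qed.

End Separation.

Lemma approx_polar (f : fm) : in_lang L f -> forall p, polar p f ->
  if p then approx_out f else approx_in f.
Proof.
  induction f; intros Hf p Hp; destruct p; simpl in Hf, Hp |- *; try discriminate.
  - apply approx_out_var.
  - destruct Hf as [_ [F1 F2]], Hp as [P1 P2].
    apply approx_out_and; [apply S_closed_of_lang .. | apply (IHf1 F1 true) | apply (IHf2 F2 true)];
      assumption.
  - destruct Hf as [_ [F1 F2]], Hp as [P1 P2].
    apply approx_in_and; [apply (IHf1 F1 false) | apply (IHf2 F2 false)]; assumption.
  - destruct Hf as [LO [F1 F2]], Hp as [P1 P2].
    apply approx_out_or;
      [| apply S_closed_of_lang .. | apply (IHf1 F1 true) | apply (IHf2 F2 true)]; assumption.
  - destruct Hf as [LO [F1 F2]], Hp as [P1 P2].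
    apply approx_in_or; [apply (S_closed_of_lang (Or f1 f2)); simpl; auto | |].
    + apply (IHf1 F1 false P1).
    + apply (IHf2 F2 false P2).
  - destruct Hf as [LI [F1 F2]], Hp as [P1 P2].
    apply approx_out_imp; [apply S_closed_of_lang | apply (IHf1 F1 false) | apply (IHf2 F2 true)];
      assumption.
  - destruct Hf as [LI [F1 F2]], Hp as [P1 P2].
    apply approx_in_imp; [apply S_closed_of_lang .. | apply (S_closed_of_lang (Imp f1 f2)) | | | |];
      simpl; auto.
    + apply (IHf1 F1 true P1).
    + apply (IHf2 F2 false P2).
  - destruct Hf as [LN F].
    apply (approx_out_imp f Bot);
      [apply S_closed_bot, LN | apply (IHf F false Hp) | apply approx_out_bot].
  - destruct Hf as [LN F].
    apply (approx_in_imp f Bot); [apply S_closed_of_lang, F | apply S_closed_bot, LN | | exact Hp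
      | exact I | apply (IHf F true Hp) | apply approx_in_bot].
    apply (S_closed_of_lang (Neg f)). simpl; auto.
  - apply approx_out_bot.
  - apply approx_in_bot.
  - apply approx_out_top.
  - apply approx_in_top, HS, Hf.
Qed.

Lemma approx_in_antecedent (g : fm) : sahl_ant g -> in_lang L g -> approx_in g.
Proof.
  intros Ag. induction Ag as [n | f Nf | | | a b _ IHa _ IHb | a b _ IHa _ IHb]; simpl; intros Hg.
  - apply approx_in_var.
  - exact (approx_polar f Hg false Nf).
  - apply approx_in_bot.
  - apply approx_in_top, HS, Hg.
  - destruct Hg as [_ [Ga Gb]]. apply approx_in_and; auto.
  - destruct Hg as [LO [Ga Gb]].
    apply approx_in_or; [apply (S_closed_of_lang (Or a b)); simpl | |]; auto.
Qed.

Lemma approx_out_sahl_impl (f : fm) : sahl_impl f -> in_lang L f -> approx_out f.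
Proof.
  intros [Pf | [[g [-> Ag]] | [g [h [-> [Ag Ph]]]]]] Hf.
  - exact (approx_polar f Hf true Pf).
  - destruct Hf as [LN Gg].
    apply (approx_out_imp g Bot);
      [apply S_closed_bot | apply approx_in_antecedent | apply approx_out_bot]; assumption.
  - destruct Hf as [LI [Gg Gh]].
    apply approx_out_imp; [apply S_closed_of_lang, Gh | apply approx_in_antecedent; assumption |
      exact (approx_polar h Gh true Ph)].
Qed.

Lemma approx_out_sahl_comb (f : fm) : sahl_comb f -> in_lang L f -> approx_out f.
Proof.
  intros Cf. induction Cf as [f If | a b _ IHa _ IHb | a b _ IHa _ IHb]; simpl; intros Hf.
  - apply approx_out_sahl_impl; assumption.
  - destruct Hf as [_ [Fa Fb]]. apply approx_out_and; [apply S_closed_of_lang .. | |]; auto.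
  - destruct Hf as [LO [Fa Fb]]. apply approx_out_or; [| apply S_closed_of_lang .. | |]; auto.
Qed.

Lemma eventually_out_premises (prems : list fm) (K : X) :
  (forall phi, In phi prems -> sahl_comb phi /\ in_lang L phi) ->
  (forall phi, In phi prems -> ~ upval induced_val phi K) ->
  eventually (fun a => forall phi, In phi prems -> ~ pt K (hval a phi)).
Proof.
  induction prems as [| phi prems IH]; intros Hprems Hout.
  { apply eventually_always. intros a _ phi []. }
  destruct (Hprems phi (or_introl eq_refl)) as [Cphi Lphi].
  pose proof (approx_out_sahl_comb phi Cphi Lphi K (Hout phi (or_introl eq_refl))) as Ephi.
  pose proof (IH (fun psi I => Hprems psi (or_intror I)) (fun psi I => Hout psi (or_intror I)))
    as Eprems.
  generalize (eventually_and _ _ Ephi Eprems). apply eventually_mono.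
  intros a _ [Nphi Nprems] psi [<- | I]; [exact Nphi | exact (Nprems psi I)].
Qed.

End Approximation.

Section Witnesses.
Variables (H : HA) (S : H -> Prop) (L : sym -> Prop).
Hypothesis HS : subreduct L H S.
Hypothesis HL : L SAnd.

Notation X := (Astar H S).
Notation Xle := (Astar_le H S).
Notation pt := (pt H S).
Notation upval W f := (eval (Up_ops Xle) W f).
Notation hval a f := (eval (HA_ops H) a f).

Variable V : nat -> X -> Prop.
Hypothesis HV : forall n, is_upset Xle (V n).
Variable F : X.

Lemma antecedent_support (g : fm) (G : X) : sahl_ant g -> upval V g G ->
  exists vs : nat -> bool, (forall n, vs n = true -> V n G) /\
    forall W, (forall n, vs n = true -> W n G) ->
      (forall c, negative c -> upval V c G -> upval W c G) -> upval W g G.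
Proof.
  intros Ag. induction Ag as [n | c Nc | | | a b _ IHa _ IHb | a b _ IHa _ IHb]; simpl; intros Hg.
  - exists (Nat.eqb n). split.
    + intros m E. apply PeanoNat.Nat.eqb_eq in E. subst m. exact Hg.
    + intros W Wvs _. apply Wvs, PeanoNat.Nat.eqb_refl.
  - exists (fun _ => false). split; [discriminate |]. intros W _ Wneg. exact (Wneg c Nc Hg).
  - destruct Hg.
  - exists (fun _ => false). split; [discriminate |]. intros W _ _. exact I.
  - destruct Hg as [Ga Gb]. destruct (IHa Ga) as [vsa [Va Wa]], (IHb Gb) as [vsb [Vb Wb]].
    exists (fun n => orb (vsa n) (vsb n)). split.
    + intros n E. apply Bool.orb_true_iff in E as [E | E]; auto.
    + intros W Wvs Wneg. split; [apply Wa | apply Wb]; auto;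
        intros n E; apply Wvs; rewrite E; [reflexivity | apply Bool.orb_true_r].
  - destruct Hg as [Ga | Gb].
    + destruct (IHa Ga) as [vs [Vvs Wvs]]. exists vs. split; auto.
    + destruct (IHb Gb) as [vs [Vvs Wvs]]. exists vs. split; auto.
Qed.

Definition single_witness (vs : nat -> bool) (G : X) (n : nat) : list X := if vs n then [G] else [].

Lemma in_single_witness (vs : nat -> bool) (G K : X) (n : nat) :
  In K (single_witness vs G n) <-> vs n = true /\ K = G.
Proof.
  unfold single_witness. destruct (vs n); simpl; split.
  - intros [<- | []]. auto.
  - intros [_ <-]. left; reflexivity.
  - intros [].
  - intros [E _]. discriminate.
Qed.

(* [Adm] delimits the valuations that are known to stay below [V] where it matters, and [Wit]
   the admissible witness points [K] for a variable [n]. *)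
Section Refutation.
Variable Adm : (nat -> X -> Prop) -> Prop.
Variable Wit : nat -> X -> Prop.

Definition refuted_by (ws : nat -> list X) (R : (nat -> X -> Prop) -> Prop) : Prop :=
  (forall n K, In K (ws n) -> Wit n K) /\
  forall W, Adm W -> (forall n K, In K (ws n) -> W n K) -> R W.

Definition refutable (f : fm) : Prop := exists ws, refuted_by ws (fun W => ~ upval W f F).

Lemma refuted_by_nil (R : (nat -> X -> Prop) -> Prop) :
  (forall W, Adm W -> R W) -> refuted_by (fun _ => []) R.
Proof. intros HR. split; [intros n K [] | intros W AW _; exact (HR W AW)]. Qed.

Lemma refuted_by_mono (ws : nat -> list X) (R1 R2 : (nat -> X -> Prop) -> Prop) :
  (forall W, R1 W -> R2 W) -> refuted_by ws R1 -> refuted_by ws R2.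
Proof. intros R12 [Wws Rws]. split; [exact Wws | auto]. Qed.

Lemma refuted_by_app (ws1 ws2 : nat -> list X) (R1 R2 : (nat -> X -> Prop) -> Prop) :
  refuted_by ws1 R1 -> refuted_by ws2 R2 ->
  refuted_by (fun n => ws1 n ++ ws2 n) (fun W => R1 W /\ R2 W).
Proof.
  intros [W1 R1ws] [W2 R2ws]. split.
  - intros n K I. apply in_app_or in I as [I | I]; auto.
  - intros W AW Wws.
    split; [apply R1ws | apply R2ws]; auto; intros n K I; apply Wws, in_or_app; auto.
Qed.

Hypothesis impl_refutable : forall f, sahl_impl f -> in_lang L f -> ~ upval V f F -> refutable f.

Lemma comb_refutable (f : fm) : sahl_comb f -> in_lang L f -> ~ upval V f F -> refutable f.
Proof.
  intros Cf. induction Cf as [f If | a b _ IHa _ IHb | a b _ IHa _ IHb]; simpl; intros Hf NF.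
  - apply impl_refutable; assumption.
  - destruct Hf as [_ [Fa Fb]]. apply not_and_or in NF as [Na | Nb].
    + destruct (IHa Fa Na) as [ws Rws]. exists ws. revert Rws. apply refuted_by_mono. simpl. tauto.
    + destruct (IHb Fb Nb) as [ws Rws]. exists ws. revert Rws. apply refuted_by_mono. simpl. tauto.
  - destruct Hf as [_ [Fa Fb]]. apply not_or_and in NF as [Na Nb].
    destruct (IHa Fa Na) as [wsa Ra], (IHb Fb Nb) as [wsb Rb].
    exists (fun n => wsa n ++ wsb n). generalize (refuted_by_app _ _ _ _ Ra Rb).
    apply refuted_by_mono. simpl. tauto.
Qed.

Lemma premises_refuted (prems : list fm) :
  (forall phi, In phi prems -> sahl_comb phi /\ in_lang L phi) ->
  (forall phi, In phi prems -> ~ upval V phi F) ->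
  exists ws, refuted_by ws (fun W => forall phi, In phi prems -> ~ upval W phi F).
Proof.
  induction prems as [| phi prems IH]; intros Hprems Hout.
  { exists (fun _ => []). apply refuted_by_nil. intros W _ phi []. }
  destruct (Hprems phi (or_introl eq_refl)) as [Cphi Lphi].
  destruct (comb_refutable phi Cphi Lphi (Hout phi (or_introl eq_refl))) as [ws1 R1].
  destruct IH as [ws2 R2];
    [intros psi I; apply Hprems; right; exact I | intros psi I; apply Hout; right; exact I |].
  exists (fun n => ws1 n ++ ws2 n). generalize (refuted_by_app _ _ _ _ R1 R2).
  apply refuted_by_mono. intros W [N1 N2] psi [<- | I]; [exact N1 | exact (N2 psi I)].
Qed.

End Refutation.

Definition below_V (W : nat -> X -> Prop) : Prop := forall n K, W n K -> V n K.

(* Witnesses come from premises [~ g] or [g -> h]; under the case hypothesis below both force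
   [L SImp], which makes every point prime. *)
Definition witness_imp (n : nat) (K : X) : Prop := Xle F K /\ V n K /\ L SImp.

Lemma impl_refutable_imp : L SImp \/ ~ L SNeg ->
  forall f, sahl_impl f -> in_lang L f -> ~ upval V f F -> refutable below_V witness_imp f.
Proof.
  intros Hcase f [Pf | [[g [-> Ag]] | [g [h [-> [Ag Ph]]]]]] Hf NF.
  - exists (fun _ => []). apply refuted_by_nil. intros W WV Wf.
    exact (NF (upval_polar_mono H S W V WV f true Pf F Wf)).
  - destruct Hf as [LN _]. assert (LI : L SImp) by tauto.
    apply NNPP in NF as [G [FG [Gg _]]].
    destruct (antecedent_support g G Ag Gg) as [vs [Vvs Wvs]].
    exists (single_witness vs G). split.
    + intros n K I. apply in_single_witness in I as [E ->]. split; [exact FG | split; auto].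
    + intros W WV Wws Hi. apply Hi. exists G. split; [exact FG | split; [| intros []]].
      apply Wvs; [intros n E; apply Wws, in_single_witness; auto |].
      intros c Nc. exact (upval_polar_mono H S W V WV c false Nc G).
  - destruct Hf as [LI _]. apply NNPP in NF as [G [FG [Gg Gh]]].
    destruct (antecedent_support g G Ag Gg) as [vs [Vvs Wvs]].
    exists (single_witness vs G). split.
    + intros n K I. apply in_single_witness in I as [E ->]. split; [exact FG | split; auto].
    + intros W WV Wws Hi. apply Hi. exists G. split; [exact FG | split].
      * apply Wvs; [intros n E; apply Wws, in_single_witness; auto |].
        intros c Nc. exact (upval_polar_mono H S W V WV c false Nc G).
      * intro Wh. exact (Gh (upval_polar_mono H S W V WV h true Ph G Wh)).
Qed.

Definition below_V_at_maximal (W : nat -> X -> Prop) : Prop :=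
  (forall n, is_upset Xle (W n)) /\
  (forall n M, maximal_filter H S (pt M) -> W n M -> V n M) /\
  (forall n, W n F -> V n F).

Definition witness_neg (n : nat) (K : X) : Prop := Xle F K /\ V n K /\ maximal_filter H S (pt K).

Lemma maximal_point_above (G : X) : L SNeg -> exists M : X, maximal_filter H S (pt M) /\ Xle G M.
Proof.
  intros LN.
  destruct (exists_maximal_filter H S L HS HL (pt G) LN (pt_filter H S G) (pt_nobot H S G))
    as [M [HM [MM GM]]].
  exists (exist _ M HM). split; [exact MM | exact GM].
Qed.

(* Without implication, a positive formula only looks at [F] itself and at maximal points. *)
Lemma positive_below_V (W : nat -> X -> Prop) : L SNeg -> ~ L SImp -> below_V_at_maximal W ->
  forall p, positive p -> in_lang L p -> upval W p F -> upval V p F.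
Proof.
  intros LN NI [HW [WVmax WVF]] p. unfold positive.
  induction p; simpl; intros Pp Lp; try tauto.
  - apply WVF.
  - intros Hi [G [FG [Gp _]]]. apply Hi.
    destruct (maximal_point_above G LN) as [M [HM GM]].
    exists M. split; [exact (Xle_trans H S _ _ _ FG GM) | split; [| intros []]].
    apply (upval_polar_mono_at_maximal H S W V HW HV WVmax p false Pp M HM).
    exact (upval_upset H S V p HV G M Gp GM).
Qed.

Lemma impl_refutable_neg : L SNeg -> ~ L SImp ->
  forall f, sahl_impl f -> in_lang L f -> ~ upval V f F ->
  refutable below_V_at_maximal witness_neg f.
Proof.
  intros LN NI f [Pf | [[g [-> Ag]] | [g [h [-> _]]]]] Hf NF.
  - exists (fun _ => []). apply refuted_by_nil. intros W AW Wf.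
    exact (NF (positive_below_V W LN NI AW f Pf Hf Wf)).
  - apply NNPP in NF as [G [FG [Gg _]]].
    destruct (maximal_point_above G LN) as [M [HM GM]].
    assert (FM : Xle F M) by exact (Xle_trans H S _ _ _ FG GM).
    destruct (antecedent_support g M Ag (upval_upset H S V g HV G M Gg GM)) as [vs [Vvs Wvs]].
    exists (single_witness vs M). split.
    + intros n K I. apply in_single_witness in I as [E ->]. split; [exact FM | split; auto].
    + intros W [HW [WVmax WVF]] Wws Hi. apply Hi.
      exists M. split; [exact FM | split; [| intros []]].
      apply Wvs; [intros n E; apply Wws, in_single_witness; auto |].
      intros c Nc. exact (upval_polar_mono_at_maximal H S W V HW HV WVmax c false Nc M HM).
  - destruct Hf as [LI _]. contradiction.
Qed.

End Witnesses.

Section Assignments.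
Variables (H : HA) (S : H -> Prop) (L : sym -> Prop).
Hypothesis HS : subreduct L H S.
Hypothesis HL : L SAnd.

Notation X := (Astar H S).
Notation Xle := (Astar_le H S).
Notation pt := (pt H S).
Notation upval W f := (eval (Up_ops Xle) W f).
Notation hval a f := (eval (HA_ops H) a f).

Definition witness_assign (ws : nat -> list X) (a : nat -> H) : Prop :=
  forall n, S (a n) /\ forall K, In K (ws n) -> pt K (a n).

Lemma witness_assign_S (ws : nat -> list X) (a : nat -> H) :
  witness_assign ws a -> forall n, S (a n).
Proof. intros Da n. apply Da. Qed.

Lemma witness_assign_directed (ws : nat -> list X) (a b : nat -> H) :
  witness_assign ws a -> witness_assign ws b ->
  exists c, witness_assign ws c /\ assign_le H c a /\ assign_le H c b.
Proof.
  intros Da Db. exists (fun n => hmeet H (a n) (b n)).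
  split; [| split; intros n; [apply hle_meet_l | apply hle_meet_r]].
  intros n. destruct (Da n) as [Sa Ka], (Db n) as [Sb Kb].
  split; [apply (S_meet H S L HS HL); assumption |]. intros K I. apply pt_meet; auto.
Qed.

Lemma witness_assign_nonempty (ws : nat -> list X) :
  (forall n K, In K (ws n) -> S (htop H)) -> exists a, witness_assign ws a.
Proof.
  intros Htop. destruct (classic (S (htop H))) as [St | NSt].
  - exists (fun _ => htop H). intros n. split; [exact St |].
    intros K _. exact (filter_top H S _ (pt_filter H S K) St).
  - destruct (S_nonempty H S L HS) as [s Ss]. exists (fun _ => s). intros n.
    split; [exact Ss | intros K I; exfalso; exact (NSt (Htop n K I))].
Qed.

Lemma induced_val_of_witness (ws : nat -> list X) (n : nat) (K : X) :
  In K (ws n) -> induced_val H S (witness_assign ws) n K.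
Proof. intros I a Da. apply (Da n), I. Qed.

Lemma induced_val_inter (ws : nat -> list X) (n : nat) (K : X) (a0 : nat -> H) :
  witness_assign ws a0 -> induced_val H S (witness_assign ws) n K ->
  forall x, S x -> (forall K', In K' (ws n) -> pt K' x) -> pt K x.
Proof.
  intros Da0 HK x Sx Hx.
  set (a := fun m => if PeanoNat.Nat.eq_dec m n then x else a0 m).
  assert (Da : witness_assign ws a).
  { intros m. unfold a.
    destruct (PeanoNat.Nat.eq_dec m n) as [-> | _]; [split; assumption | apply Da0]. }
  specialize (HK a Da). unfold a in HK.
  destruct (PeanoNat.Nat.eq_dec n n) as [_ | NE]; [exact HK | contradiction (NE eq_refl)].
Qed.

Lemma induced_val_below (V : nat -> X -> Prop) (ws : nat -> list X) (n : nat) (K : X)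
  (B : H -> Prop) :
  is_upset Xle (V n) -> (forall K', In K' (ws n) -> V n K') -> (exists a, witness_assign ws a) ->
  (forall x, B x -> S x) -> (forall K', In K' (ws n) -> forall x, B x -> pt K' x) ->
  (ws n = [] \/ prime_above H S (pt K) B) ->
  induced_val H S (witness_assign ws) n K -> V n K.
Proof.
  intros HV Vws [a0 Da0] BS BK Hprime HK.
  destruct (prime_above_list H S L HS HL (pt K) B (map pt (ws n))) as [G [IG GK]].
  - apply pt_proper.
  - exact BS.
  - destruct Hprime as [-> | P]; [left; reflexivity | right; exact P].
  - intros G IG. apply in_map_iff in IG as [K' [<- I]]. split; [apply pt_filter | apply BK, I].
  - exists (a0 n). split; [apply Da0 |]. intros G IG. apply in_map_iff in IG as [K' [<- I]].
    apply Da0, I.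
  - intros x Sx Hx. apply (induced_val_inter ws n K a0 Da0 HK x Sx).
    intros K' I. apply Hx, in_map_iff. exists K'. auto.
  - apply in_map_iff in IG as [K' [<- I]]. exact (HV K' K (Vws K' I) GK).
Qed.

Lemma assignment_of_witnesses (ws : nat -> list X) (F : X) (prems : list fm) :
  (exists a, witness_assign ws a) ->
  (forall phi, In phi prems -> sahl_comb phi /\ in_lang L phi) ->
  (forall phi, In phi prems -> ~ upval (induced_val H S (witness_assign ws)) phi F) ->
  exists a, (forall n, S (a n)) /\ forall phi, In phi prems -> ~ pt F (hval a phi).
Proof.
  intros Dne Hprems Hout.
  destruct (eventually_witness H _ _ (eventually_out_premises H S L HS HL (witness_assign ws) Dne
    (witness_assign_directed ws) (witness_assign_S ws) prems F Hprems Hout)) as [a [Da Ha]].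
  exists a. split; [exact (witness_assign_S ws a Da) | exact Ha].
Qed.

Section Cases.
Variable V : nat -> X -> Prop.
Hypothesis HV : forall n, is_upset Xle (V n).
Variables (F : X) (prems : list fm).
Hypothesis Hprems : forall phi, In phi prems -> sahl_comb phi /\ in_lang L phi.
Hypothesis Hout : forall phi, In phi prems -> ~ upval V phi F.

Lemma assignment_case_imp : L SImp \/ ~ L SNeg ->
  exists a, (forall n, S (a n)) /\ forall phi, In phi prems -> ~ pt F (hval a phi).
Proof.
  intros Hcase.
  destruct (premises_refuted H S L V F (below_V H S V) (witness_imp H S L V F)
    (impl_refutable_imp H S L V F Hcase) prems Hprems Hout) as [ws [Wws Rws]].
  assert (Dne : exists a, witness_assign ws a).
  { apply witness_assign_nonempty. intros n K I. apply (S_top_of_imp H S L HS), (Wws n K I). }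
  assert (Vws : forall n K, In K (ws n) -> V n K) by (intros n K I; apply (Wws n K I)).
  apply (assignment_of_witnesses ws F prems Dne Hprems), Rws; [| exact (induced_val_of_witness ws)].
  intros n K HK.
  apply (induced_val_below V ws n K (fun _ => False) (HV n) (Vws n) Dne);
    [tauto | tauto | | exact HK].
  destruct (ws n) as [| K0 l] eqn:E; [left; reflexivity | right].
  apply (mi_prime_of_imp H S L HS HL _ (pt_mi H S K)), (Wws n K0). rewrite E. left; reflexivity.
Qed.

Lemma assignment_case_neg : L SNeg -> ~ L SImp ->
  exists a, (forall n, S (a n)) /\ forall phi, In phi prems -> ~ pt F (hval a phi).
Proof.
  intros LN NI.
  destruct (premises_refuted H S L V F (below_V_at_maximal H S V F) (witness_neg H S V F)
    (impl_refutable_neg H S L HS HL V HV F LN NI) prems Hprems Hout) as [ws [Wws Rws]].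
  assert (Dne : exists a, witness_assign ws a).
  { apply witness_assign_nonempty. intros n K I. apply (S_top_of_neg H S L HS HL LN). }
  assert (Vws : forall n K, In K (ws n) -> V n K) by (intros n K I; apply (Wws n K I)).
  apply (assignment_of_witnesses ws F prems Dne Hprems), Rws; [| exact (induced_val_of_witness ws)].
  split; [apply induced_val_upset | split].
  - intros n M HM HK.
    apply (induced_val_below V ws n M (fun _ => False) (HV n) (Vws n) Dne);
      [tauto | tauto | right | exact HK].
    exact (maximal_prime_of_neg H S L HS HL _ HM LN).
  - intros n HK.
    apply (induced_val_below V ws n F (pt F) (HV n) (Vws n) Dne (pt_sub H S F)
      (fun K' I => proj1 (Wws n K' I))); [right | exact HK].
    apply mi_prime_above_self, pt_mi.
Qed.

End Cases.

Lemma assignment_refuting_premises (V : nat -> X -> Prop) (F : X) (prems : list fm) :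
  (forall n, is_upset Xle (V n)) ->
  (forall phi, In phi prems -> sahl_comb phi /\ in_lang L phi) ->
  (forall phi, In phi prems -> ~ upval V phi F) ->
  exists a, (forall n, S (a n)) /\ forall phi, In phi prems -> ~ pt F (hval a phi).
Proof.
  intros HV Hprems Hout. destruct (classic (L SImp \/ ~ L SNeg)) as [Hcase | Hcase].
  - exact (assignment_case_imp V HV F prems Hprems Hout Hcase).
  - apply not_or_and in Hcase as [NI LN]. apply NNPP in LN.
    exact (assignment_case_neg V HV F prems Hprems Hout LN NI).
Qed.

End Assignments.

Lemma eval_ext {T : Type} (o : ops T) (v w : nat -> T) (f : fm) :
  (forall n, occurs n f -> v n = w n) -> eval o v f = eval o w f.
Proof.
  induction f; simpl; intros E; try reflexivity.
  - apply E; reflexivity.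
  - rewrite IHf1, IHf2; auto.
  - rewrite IHf1, IHf2; auto.
  - rewrite IHf1, IHf2; auto.
  - rewrite IHf; auto.
Qed.

Lemma sub_validates_elim (H : HA) (S : H -> Prop) (L : sym -> Prop) (q : quasieq) :
  sahlqvist_qe L q -> sub_validates H S q ->
  forall (a : nat -> H) (y z : H), (forall n, S (a n)) -> S y -> S z ->
  (forall phi, In phi (qe_prems q) -> hle H (hmeet H (eval (HA_ops H) a phi) y) z) -> hle H y z.
Proof.
  intros [Hyz Hprems] Hvalid a y z Sa Sy Sz Hle.
  set (v := fun m => if Nat.eqb m (qe_y q) then y else if Nat.eqb m (qe_z q) then z else a m).
  assert (vy : v (qe_y q) = y) by (unfold v; rewrite PeanoNat.Nat.eqb_refl; reflexivity).
  assert (vz : v (qe_z q) = z).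
  { unfold v. rewrite PeanoNat.Nat.eqb_refl.
    destruct (PeanoNat.Nat.eqb_spec (qe_z q) (qe_y q)) as [E | _];
      [contradiction (Hyz (eq_sym E)) | reflexivity]. }
  assert (v_prems : forall phi, In phi (qe_prems q) ->
            eval (HA_ops H) v phi = eval (HA_ops H) a phi).
  { intros phi I. destruct (Hprems phi I) as [_ [_ [Ny Nz]]].
    apply eval_ext. intros n On. unfold v.
    destruct (PeanoNat.Nat.eqb_spec n (qe_y q)) as [-> | _]; [contradiction |].
    destruct (PeanoNat.Nat.eqb_spec n (qe_z q)) as [-> | _]; [contradiction | reflexivity]. }
  unfold hle. rewrite <- vy, <- vz. apply Hvalid.
  - intros n. unfold v. destruct (Nat.eqb n (qe_y q)); [exact Sy |].
    destruct (Nat.eqb n (qe_z q)); auto.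
  - intros phi I. simpl. rewrite (v_prems phi I), vy, vz. exact (Hle phi I).
Qed.

Lemma Up_validates_intro {X : Type} (le : X -> X -> Prop) (q : quasieq) :
  (forall V, (forall n, is_upset le (V n)) ->
     forall x, (forall phi, In phi (qe_prems q) -> ~ eval (Up_ops le) V phi x) -> False) ->
  Up_validates le q.
Proof.
  intros Hno V HV Hprem x. simpl. split; [tauto |]. intros Vy. split; [exact Vy |].
  apply NNPP; intro Nz. apply (Hno V HV x). intros phi I Vphi.
  pose proof (Hprem phi I x) as E. simpl in E. tauto.
Qed.

Theorem theorem5p1 (L : sym -> Prop) (HL : L SAnd) (q : quasieq)
  (Hq : sahlqvist_qe L q) (H : HA) (S : H -> Prop) (HS : subreduct L H S) :
  sub_validates H S q -> Up_validates (Astar_le H S) q.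
Proof.
  intros Hvalid. apply Up_validates_intro. intros V HV F Hout.
  assert (Hprems : forall phi, In phi (qe_prems q) -> sahl_comb phi /\ in_lang L phi)
    by (intros phi I; destruct Hq as [_ Hq]; destruct (Hq phi I) as [? [? _]]; auto).
  destruct (assignment_refuting_premises H S L HS HL V F (qe_prems q) HV Hprems Hout)
    as [a [Sa Ha]].
  destruct (separating_pair H S L HS HL (pt H S F) (map (eval (HA_ops H) a) (qe_prems q))
    (pt_mi H S F)) as [y [z [Sy [Sz [Hyz Nyz]]]]].
  { intros b Ib. apply in_map_iff in Ib as [phi [<- I]].
    split; [apply (S_eval H S L HS HL); [exact Sa | apply Hprems, I] | exact (Ha phi I)]. }
  apply Nyz, (sub_validates_elim H S L q Hq Hvalid a y z Sa Sy Sz).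
  intros phi I. apply Hyz, in_map_iff. exists phi. auto.
Qed.
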